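(* In the ARRU model described in the context: (a) $Y_n\to\infty$ almost surely; (b) $\min\{N_{1,n},N_{2,n}\}\to\infty$ almost surely.
   Context: ARRU model. Fix $0<a\le b<\infty$, a measurable space $S$, probability measures $\mu_1,\mu_2$ on $S$ and a measurable $u:S\to[a,b]$. On a probability space let $(\xi_{1,n})_{n\ge1}$ be i.i.d. with law $\mu_1$, $(\xi_{2,n})_{n\ge1}$ i.i.d. with law $\mu_2$, and $(U_n)_{n\ge1}$ i.i.d. uniform on $(0,1)$, the three sequences mutually independent. Put $D_{j,n}=u(\xi_{j,n})$ ($j=1,2$). Fix $y_{1,0},y_{2,0}>0$, and set $Y_{1,0}=y_{1,0}$, $Y_{2,0}=y_{2,0}$. Let $\mathcal F_0$ be trivial and $\mathcal F_n=\sigma\big(X_i,\ X_i\xi_{1,i}+(1-X_i)\xi_{2,i}:\ i\le n\big)$. Thresholds $\hat\rho_{1,n},\hat\rho_{2,n}$ ($n\ge0$) are $\mathcal F_n$-measurable random variables with values in $(0,1)$ and $\hat\rho_{1,n}\ge\hat\rho_{2,n}$ a.s. Recursively for $n\ge0$: $Y_n=Y_{1,n}+Y_{2,n}$, $Z_n=Y_{1,n}/Y_n$, $W_{1,n}=\mathbf 1\{Z_n\le\hat\rho_{1,n}\}$, $W_{2,n}=\mathbf 1\{Z_n\ge\hat\rho_{2,n}\}$, $X_{n+1}=\mathbf 1\{U_{n+1}<Z_n\}$, $Y_{1,n+1}=Y_{1,n}+X_{n+1}D_{1,n+1}W_{1,n}$, $Y_{2,n+1}=Y_{2,n}+(1-X_{n+1})D_{2,n+1}W_{2,n}$.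 Let $N_{1,n}=\sum_{i=1}^nX_i$ and $N_{2,n}=\sum_{i=1}^n(1-X_i)$. *)

From HB Require Import structures.
From mathcomp Require Import all_boot all_order all_algebra.
From mathcomp Require Import all_classical all_reals all_analysis.
Set Implicit Arguments. Unset Strict Implicit. Unset Printing Implicit Defensive.
Import Order.TTheory GRing.Theory Num.Theory.
Local Open Scope classical_set_scope.
Local Open Scope ring_scope.

(* Conventions: sequences are 0-indexed with a shift:
   xi1 k, xi2 k, U k stand for xi_{1,k+1}, xi_{2,k+1}, U_{k+1};
   rho1 n, rho2 n stand for hat rho_{1,n}, hat rho_{2,n} (n >= 0, no shift). *)

Section ARRU.
Context {R : realType} {Omega : Type} {S : Type}.
Variables (u : S -> R) (y10 y20 : R) (rho1 rho2 : nat -> Omega -> R)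
  (xi1 xi2 : nat -> Omega -> S) (U : nat -> Omega -> R).

Fixpoint arru_Y12 (n : nat) (w : Omega) : R * R :=
  match n with
  | 0%N => (y10, y20)
  | n'.+1 =>
    let y1 := (arru_Y12 n' w).1 in
    let y2 := (arru_Y12 n' w).2 in
    let z := y1 / (y1 + y2) in
    let x := U n' w < z in
    let w1 := z <= rho1 n' w in
    let w2 := rho2 n' w <= z in
    (y1 + (if x && w1 then u (xi1 n' w) else 0),
     y2 + (if ~~ x && w2 then u (xi2 n' w) else 0))
  end.

Definition arru_Y1 n w := (arru_Y12 n w).1.
Definition arru_Y2 n w := (arru_Y12 n w).2.
Definition arru_Y n w := arru_Y1 n w + arru_Y2 n w.
Definition arru_Z n w := arru_Y1 n w / arru_Y n w.
(* arru_X k w is X_{k+1}(w) (as a boolean) *)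
Definition arru_X (k : nat) (w : Omega) : bool := U k w < arru_Z k w.
(* observed xi at step k+1: X_{k+1} xi_{1,k+1} + (1 - X_{k+1}) xi_{2,k+1} *)
Definition arru_obs (k : nat) (w : Omega) : S :=
  if arru_X k w then xi1 k w else xi2 k w.
Definition arru_N1 (n : nat) (w : Omega) : nat := \sum_(k < n) (arru_X k w : nat).
Definition arru_N2 (n : nat) (w : Omega) : nat := \sum_(k < n) (~~ arru_X k w : nat).

End ARRU.

(* generators of F_n = sigma(X_i, observed xi_i : i <= n) *)
Definition arru_gen {R : realType} {Omega : Type} {dS : measure_display}
  {S : measurableType dS} (u : S -> R) (y10 y20 : R)
  (rho1 rho2 : nat -> Omega -> R) (xi1 xi2 : nat -> Omega -> S)
  (U : nat -> Omega -> R) (n : nat) : set (set Omega) :=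
  [set E | exists2 k : nat, (k < n)%N &
     (E = [set w | arru_X u y10 y20 rho1 rho2 xi1 xi2 U k w]) \/
     (exists2 A : set S, measurable A &
        E = arru_obs u y10 y20 rho1 rho2 xi1 xi2 U k @^-1` A)].

Definition arru_Fmeas {R : realType} {Omega : Type} {dS : measure_display}
  {S : measurableType dS} (u : S -> R) (y10 y20 : R)
  (rho1 rho2 : nat -> Omega -> R) (xi1 xi2 : nat -> Omega -> S)
  (U : nat -> Omega -> R) (n : nat) (f : Omega -> R) : Prop :=
  forall B : set R, measurable B ->
    <<s arru_gen u y10 y20 rho1 rho2 xi1 xi2 U n >> (f @^-1` B).

(* (b) If from step m on the same urn is always drawn, then U_k >= Z_k for all
   k >= m (or U_k < Z_k for all k >= m).  Since Y_k <= y10 + y20 + b k, the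
   proportion Z_k stays above y10 / (y10 + y20 + b k) and below
   1 - y20 / (y10 + y20 + b k), so the U_k, which are independent and uniform,
   all avoid sets of lengths c_k with sum c_k = oo; this has probability
   prod (1 - c_k) = 0.
   (a) Every added ball increases Y by at least a, so a bounded Y is eventually
   constant, with Z then frozen in some [delta, 1 - delta].  As rho2 <= rho1,
   no ball is added at step k only if U_k falls on the side of Z prescribed by
   the past; U_k is independent of the past (the sigma-algebra of the first k
   coordinates, which contains F_k), so each such step has conditional
   probability at most 1 - delta, and infinitely many have probability 0. *)

From HB Require Import structures.
From mathcomp Require Import all_boot all_order all_algebra.
From mathcomp Require Import all_classical all_reals all_analysis.
From mathcomp Require Import measurable_realfun ring lra.
Import Order.TTheory GRing.Theory Num.Theory.
Local Open Scope classical_set_scope.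
Local Open Scope ring_scope.
Set Implicit Arguments. Unset Strict Implicit. Unset Printing Implicit Defensive.

Section real_bounds.
Context (R : realType).

Lemma prod1B_sum_le1 (g : nat -> R) n : (forall k, 0 <= g k <= 1) ->
  (\prod_(k < n) (1 - g k)) * (1 + \sum_(k < n) g k) <= 1.
Proof.
move=> g01; elim: n => [|n IH]; first by rewrite !big_ord0 addr0 mulr1.
rewrite !big_ord_recr /=.
set p := \prod_(i < n) _ in IH *; set s := \sum_(i < n) _ in IH *.
have p0 : 0 <= p by apply: prodr_ge0 => i _; have := g01 i; lra.
have s0 : 0 <= s by apply: sumr_ge0 => i _; have := g01 i; lra.
have /andP[g0 g1] := g01 n.
apply: le_trans IH.
rewrite -mulrA; apply: ler_wpM2l => //; nra.
Qed.

Lemma expr1B_mul1D_le1 (d : R) i : 0 <= d <= 1 -> (1 - d) ^+ i * (1 + d * i%:R) <= 1.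
Proof.
move=> d01; have := prod1B_sum_le1 i (fun _ : nat => d01).
by rewrite prodr_const sumr_const !card_ord mulr_natr.
Qed.

Lemma harmonic_tail_unbounded m (M : R) :
  exists n, M <= \sum_(m <= k < n) harmonic k.
Proof.
have /cvgryPge /(_ (M + series harmonic m)) [n0 _ Hn0] :=
  nondecreasing_dvgn_lt (@nondecreasing_series _ _ xpredT 0 (fun k _ _ => harmonic_ge0 k))
    (@dvg_harmonic R).
exists (maxn n0 m); have := Hn0 (maxn n0 m) (leq_maxl _ _).
rewrite /series /= (big_cat_nat _ (leq_maxr n0 m)) //=.
by rewrite (addrC M) lerD2l.
Qed.

End real_bounds.

Lemma negligible_bigcap (R : realType) d (T : measurableType d)
    (mu : {measure set T -> \bar R}) (E : nat -> set T) :
  (forall n, measurable (E n)) -> (forall e : R, 0 < e -> exists n, (mu (E n) <= e%:E)%E) ->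
  mu.-negligible (\bigcap_n E n).
Proof.
move=> mE small; exists (\bigcap_n E n); split => //; first exact: bigcapT_measurable.
apply/eqP; rewrite eq_le measure_ge0 andbT; apply/lee_addgt0Pr => e e0.
have [n hn] := small e e0; rewrite add0e; apply: le_trans hn.
by apply: le_measure; rewrite ?inE //; [exact: bigcapT_measurable|exact: bigcap_inf].
Qed.

Lemma sum_nat_unbounded (f : nat -> bool) : (forall m, exists2 k, (m <= k)%N & f k) ->
  forall j, exists n, (j <= \sum_(k < n) f k)%N.
Proof.
move=> often; have mono : {homo (fun n => \sum_(k < n) (f k : nat)) : p q / (p <= q)%N}.
  by apply: homo_leq leqnn leq_trans _ => n; rewrite big_ord_recr leq_addr.
elim=> [|j [n hn]]; first by exists 0%N.
have [k nk fk] := often n; exists k.+1.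
by rewrite big_ord_recr /= fk addn1 ltnS (leq_trans hn (mono _ _ nk)).
Qed.

Section cylinders.
Context (R : realType) (dO : measure_display) (Omega : measurableType dO)
  (P : probability Omega R) (dS : measure_display) (S : measurableType dS)
  (mu1 mu2 : probability S R) (xi1 xi2 : nat -> Omega -> S) (U : nat -> Omega -> R).
Hypothesis mxi1 : forall k, measurable_fun setT (xi1 k).
Hypothesis mxi2 : forall k, measurable_fun setT (xi2 k).
Hypothesis mU : forall k, measurable_fun setT (U k).
Hypothesis hind : forall (n : nat) (A B : nat -> set S) (C : nat -> set R),
     (forall k, measurable (A k)) -> (forall k, measurable (B k)) ->
     (forall k, measurable (C k)) ->
     P [set w | forall k, (k < n)%N -> [/\ A k (xi1 k w), B k (xi2 k w) & C k (U k w)]]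
     = (\prod_(k < n) (mu1 (A k) * mu2 (B k) * lebesgue_measure (C k `&` `]0%R, 1%R[)))%E.

Definition cylinder n (A B : nat -> set S) (C : nat -> set R) : set Omega :=
  [set w | forall k, (k < n)%N -> [/\ A k (xi1 k w), B k (xi2 k w) & C k (U k w)]].

Definition cylinders n : set (set Omega) :=
  [set E | exists A B C, [/\ (forall k, measurable (A k)), (forall k, measurable (B k)),
     (forall k, measurable (C k)) & E = cylinder n A B C]].

Lemma measurable_cylinder n A B C : (forall k, measurable (A k)) ->
  (forall k, measurable (B k)) -> (forall k, measurable (C k)) ->
  measurable (cylinder n A B C).
Proof.
move=> mA mB mC.
have -> : cylinder n A B C = \bigcap_(k in [set k | (k < n)%N])
    (xi1 k @^-1` A k `&` xi2 k @^-1` B k `&` U k @^-1` C k).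
  apply/seteqP; split => w /= H k /H; first by case.
  by case=> [[]].
apply: bigcap_measurableType => k _.
by apply: measurableI; [apply: measurableI|];
  rewrite -[X in measurable X]setTI; [apply: mxi1|apply: mxi2|apply: mU].
Qed.

Lemma cylinders_measurable n : cylinders n `<=` measurable.
Proof. by move=> _ [A [B [C [mA mB mC ->]]]]; exact: measurable_cylinder. Qed.

Lemma measurable_past n : <<s cylinders n >> `<=` measurable.
Proof.
by apply: smallest_sub; [exact: sigma_algebra_measurable|exact: cylinders_measurable].
Qed.

Lemma setI_closed_cylinders n : setI_closed (cylinders n).
Proof.
move=> _ _ [A [B [C [mA mB mC ->]]]] [A' [B' [C' [mA' mB' mC' ->]]]].
exists (fun k => A k `&` A' k), (fun k => B k `&` B' k), (fun k => C k `&` C' k).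
split => [k|k|k|]; try exact: measurableI.
apply/seteqP; split => w /=.
  by move=> [H1 H2] k kn; have [? ? ?] := H1 k kn; have [? ? ?] := H2 k kn.
by move=> H; split => k kn; have [[? ?] [? ?] [? ?]] := H k kn.
Qed.

Lemma cylindersT n : cylinders n setT.
Proof.
exists (fun=> setT), (fun=> setT), (fun=> setT); split => //.
by apply/seteqP; split.
Qed.

Lemma cylinders_coord n k A B C : (k < n)%N ->
  measurable A -> measurable B -> measurable C ->
  cylinders n [set w | [/\ A (xi1 k w), B (xi2 k w) & C (U k w)]].
Proof.
move=> kn mA mB mC; pose at_k T (D : set T) j := if j == k then D else setT.
exists (at_k _ A), (at_k _ B), (at_k _ C).
split => [j|j|j|]; rewrite /at_k; try by case: eqP.
apply/seteqP; split => w /=; first by move=> H j _; case: eqP => // ->.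
by move=> /(_ k kn); rewrite eqxx.
Qed.

Lemma cylinders_widen n m : (n <= m)%N -> cylinders n `<=` cylinders m.
Proof.
move=> nm _ [A [B [C [mA mB mC ->]]]].
pose cut T (D : nat -> set T) k := if (k < n)%N then D k else setT.
exists (cut _ A), (cut _ B), (cut _ C).
split => [k|k|k|]; rewrite /cut; try by case: ifP.
apply/seteqP; split => w /=.
  by move=> H k km; case: ifP => kn //; exact: H.
by move=> H k kn; have := H k (leq_trans kn nm); rewrite kn.
Qed.

Lemma past_widen n m : (n <= m)%N -> <<s cylinders n >> `<=` <<s cylinders m >>.
Proof. by move=> nm; apply: sub_sigma_algebra2; exact: cylinders_widen. Qed.

Definition unif (C : set R) := lebesgue_measure (C `&` `]0%R, 1%R[).

Lemma unif_le1 C : measurable C -> (unif C <= 1)%E.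
Proof.
move=> mC; apply: (@le_trans _ _ (lebesgue_measure (`]0%R, 1%R[ : set R))).
  by apply: le_measure; rewrite ?inE //; apply: measurableI.
by rewrite lebesgue_measure_itv /= lte01 EFinN sube0.
Qed.

Lemma unifT : unif setT = 1%E.
Proof. by rewrite /unif setTI lebesgue_measure_itv /= lte01 EFinN sube0. Qed.

Lemma unif_itvcy (c : R) : 0 < c -> c < 1 -> unif `[c, +oo[ = (1 - c)%:E.
Proof.
move=> c0 c1; rewrite /unif.
have -> : `[c, +oo[ `&` `]0%R, 1%R[ = [set` `[c, 1%R[] :> set R.
  apply/seteqP; split => x /=; rewrite !in_itv /= ?andbT.
    by move=> [-> /andP[_ ->]].
  by move=> /andP[cx ->]; rewrite (lt_le_trans c0 cx).
by rewrite lebesgue_measure_itv /= lte_fin c1 -EFinB.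
Qed.

Lemma unif_itvNy (c : R) : 0 < c -> c < 1 -> unif `]-oo, c[ = c%:E.
Proof.
move=> c0 c1; rewrite /unif.
have -> : `]-oo, c[ `&` `]0%R, 1%R[ = [set` `]0%R, c[] :> set R.
  apply/seteqP; split => x /=; rewrite !in_itv /= ?andbT.
    by move=> [-> /andP[-> _]].
  by move=> /andP[-> xc]; rewrite xc (lt_trans xc c1).
by rewrite lebesgue_measure_itv /= lte_fin c0 sube0.
Qed.

Lemma cylinder_indep_U n E C : cylinders n E -> measurable C ->
  P (E `&` U n @^-1` C) = (P E * unif C)%E.
Proof.
move=> [A [B [D [mA mB mD ->]]]] mC.
pose ext T (F : nat -> set T) (G : set T) k := if (k < n)%N then F k else G.
have -> : cylinder n A B D `&` U n @^-1` C =
    cylinder n.+1 (ext _ A setT) (ext _ B setT) (ext _ D C).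
  apply/seteqP; split => w /=.
    move=> [H HC] k; rewrite ltnS leq_eqVlt /ext => /orP[/eqP ->|kn].
      by rewrite ltnn.
    by rewrite kn; exact: H.
  move=> H; split; last by have := H n (ltnSn n); rewrite /ext ltnn => -[].
  by move=> k kn; have := H k (ltnW kn); rewrite /ext kn.
rewrite /cylinder hind => [|k|k|k]; rewrite /ext; try by case: ifP.
rewrite hind // big_ord_recr /= ltnn !probability_setT !mul1e; congr (_ * _)%E.
by apply: eq_bigr => i _; rewrite ltn_ord.
Qed.

(* Dynkin's pi-lambda theorem extends the product rule from cylinders to the
   whole past sigma-algebra. *)
Lemma past_indep_U n C G : measurable C -> <<s cylinders n >> G ->
  P (G `&` U n @^-1` C) = (P G * unif C)%E.
Proof.
move=> mC; move: G.
have mUC : measurable (U n @^-1` C) by rewrite -[X in measurable X]setTI; apply: mU.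
have unif_fin : unif C \is a fin_num.
  by rewrite ge0_fin_numE ?measure_ge0 // (le_lt_trans (unif_le1 mC)) ?ltry.
have P_fin A : measurable A -> P A \is a fin_num by move=> mA; exact: fin_num_measure.
suff: <<s cylinders n >> `<=` [set G | measurable G /\ P (G `&` U n @^-1` C) = (P G * unif C)%E].
  by move=> H G /H [].
apply: lambda_system_subset => //.
- exact: setI_closed_cylinders.
- split => //.
  + by split; [exact: measurableT|rewrite -(cylinder_indep_U (cylindersT n))].
  + move=> A1 B1 BA [mA HA] [mB HB]; split; first exact: measurableD.
    have ltyP A : measurable A -> (P A < +oo)%E by move=> mA0; rewrite -ge0_fin_numE ?P_fin.
    have -> : (A1 `\` B1) `&` U n @^-1` C = (A1 `&` U n @^-1` C) `\` (B1 `&` U n @^-1` C).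
      apply/seteqP; split => w /=; first by move=> [[? ?] ?]; split => // -[].
      by move=> [[? ?] H]; split => //; split => // ?; apply: H.
    rewrite !measureD ?ltyP //; try exact: measurableI.
    rewrite setIACA setIid (setIidr BA) muleBl //; last exact/fin_num_adde_defr/P_fin.
    by congr (_ - _)%E; [exact: HA|exact: HB].
  + move=> F ndF HF; have mF i : measurable (F i) by case: (HF i).
    split; first exact: bigcupT_measurable.
    have mFC i : measurable (F i `&` U n @^-1` C) by exact: measurableI.
    have ndFC : {homo (fun i => F i `&` U n @^-1` C) : p q / (p <= q)%N >-> (p <= q)%O}.
      by move=> i j ij; apply/subsetPset; apply: setSI; apply/subsetPset; exact: ndF.
    have lhs := nondecreasing_cvg_mu (mu := P) mFC (bigcupT_measurable _ mFC) ndFC.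
    have rhs := cvgeZr unif_fin (nondecreasing_cvg_mu (mu := P) mF (bigcupT_measurable _ mF) ndF).
    rewrite -setI_bigcupl in lhs.
    have e : (fun i => P (F i) * unif C)%E = P \o (fun i => F i `&` U n @^-1` C).
      by apply: funext => i /=; rewrite (HF i).2.
    by rewrite e in rhs; exact: cvg_unique _ lhs rhs.
- by move=> X HX; split; [exact: (cylinders_measurable HX)|exact: cylinder_indep_U].
Qed.

Lemma negligible_U_always_in m (C : nat -> set R) (c : nat -> R) :
  (forall k, measurable (C k)) -> (forall k, (m <= k)%N -> unif (C k) = (1 - c k)%:E) ->
  (forall M, exists n, M <= \sum_(m <= k < n) c k) ->
  P.-negligible [set w | forall k, (m <= k)%N -> C k (U k w)].
Proof.
move=> mC unifC c_dvg.
pose C' k := if (m <= k)%N then C k else setT.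
pose g k := if (m <= k)%N then c k else 0.
have mC' k : measurable (C' k) by rewrite /C'; case: ifP.
have g01 k : 0 <= g k <= 1.
  rewrite /g; case: ifP => mk; last by rewrite lexx ler01.
  have := unif_le1 (mC k); have : (0 <= unif (C k))%E by exact: measure_ge0.
  by rewrite unifC // !lee_fin => ? ?; apply/andP; split; lra.
have sum_g n : \sum_(k < n) g k = \sum_(m <= k < n) c k.
  by rewrite big_geq_mkord [RHS]big_mkcond.
pose E n := cylinder n (fun=> setT) (fun=> setT) C'.
have mE n : measurable (E n) by apply: measurable_cylinder => // _; exact: measurableT.
have PE n : P (E n) = (\prod_(k < n) (1 - g k))%:E.
  rewrite /E /cylinder (@hind n (fun=> setT) (fun=> setT) C') // -prodEFin.
  apply: eq_bigr => k _.
  rewrite !probability_setT !mul1e /C' /g; case: ifP => mk; first exact: unifC.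
  by rewrite subr0; exact: unifT.
apply: (negligibleS _ (negligible_bigcap (mu := P) mE _)).
  by move=> w H n _ k _; split => //; rewrite /C'; case: ifP => // mk; exact: H.
move=> e e0; have [n hn] := c_dvg e^-1; exists n; rewrite -[leLHS]/(P (E n)) PE lee_fin.
have := prod1B_sum_le1 n g01; rewrite sum_g.
set p := \prod_(k < n) _ => hp.
have p0 : 0 <= p by apply: prodr_ge0 => k _; have := g01 k; lra.
have : p / e <= 1 by apply: le_trans hp; apply: ler_wpM2l => //; lra.
by rewrite ler_pdivrMr // mul1r.
Qed.

End cylinders.

Section arru.
Context (R : realType) (dO : measure_display) (Omega : measurableType dO)
  (P : probability Omega R) (dS : measure_display) (S : measurableType dS)
  (mu1 mu2 : probability S R) (a b : R) (u : S -> R)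
  (xi1 xi2 : nat -> Omega -> S) (U : nat -> Omega -> R)
  (y10 y20 : R) (rho1 rho2 : nat -> Omega -> R).
Hypothesis a_gt0 : 0 < a.
Hypothesis u_in_ab : forall s, a <= u s <= b.
Hypothesis y10_gt0 : 0 < y10.
Hypothesis y20_gt0 : 0 < y20.
Hypothesis mxi1 : forall k, measurable_fun setT (xi1 k).
Hypothesis mxi2 : forall k, measurable_fun setT (xi2 k).
Hypothesis mU : forall k, measurable_fun setT (U k).
Hypothesis hind : forall (n : nat) (A B : nat -> set S) (C : nat -> set R),
     (forall k, measurable (A k)) -> (forall k, measurable (B k)) ->
     (forall k, measurable (C k)) ->
     P [set w | forall k, (k < n)%N -> [/\ A k (xi1 k w), B k (xi2 k w) & C k (U k w)]]
     = (\prod_(k < n) (mu1 (A k) * mu2 (B k) * lebesgue_measure (C k `&` `]0%R, 1%R[)))%E.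

Local Notation Y1 := (arru_Y1 u y10 y20 rho1 rho2 xi1 xi2 U).
Local Notation Y2 := (arru_Y2 u y10 y20 rho1 rho2 xi1 xi2 U).
Local Notation Y := (arru_Y u y10 y20 rho1 rho2 xi1 xi2 U).
Local Notation Z := (arru_Z u y10 y20 rho1 rho2 xi1 xi2 U).
Local Notation X := (arru_X u y10 y20 rho1 rho2 xi1 xi2 U).
Local Notation N1 := (arru_N1 u y10 y20 rho1 rho2 xi1 xi2 U).
Local Notation N2 := (arru_N2 u y10 y20 rho1 rho2 xi1 xi2 U).

Lemma u_gt0 s : 0 < u s.
Proof. by have /andP[au _] := u_in_ab s; exact: lt_le_trans au. Qed.

Lemma b_gt0 : 0 < b.
Proof. by have /andP[_ ub] := u_in_ab (xi1 0 point); exact: lt_le_trans (u_gt0 _) ub. Qed.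

Lemma Y1S n w : Y1 n.+1 w =
  Y1 n w + (if X n w && (Z n w <= rho1 n w) then u (xi1 n w) else 0).
Proof. by []. Qed.

Lemma Y2S n w : Y2 n.+1 w =
  Y2 n w + (if ~~ X n w && (rho2 n w <= Z n w) then u (xi2 n w) else 0).
Proof. by []. Qed.

Lemma increment_ge0 (c : bool) s : 0 <= (if c then u s else 0).
Proof. by case: c => //; exact/ltW/u_gt0. Qed.

Lemma y10_le_Y1 n w : y10 <= Y1 n w.
Proof.
elim: n => [//|n IH]; rewrite Y1S.
by apply: le_trans IH _; rewrite lerDl increment_ge0.
Qed.

Lemma y20_le_Y2 n w : y20 <= Y2 n w.
Proof.
elim: n => [//|n IH]; rewrite Y2S.
by apply: le_trans IH _; rewrite lerDl increment_ge0.
Qed.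

Lemma Y1_gt0 n w : 0 < Y1 n w. Proof. exact: lt_le_trans (y10_le_Y1 n w). Qed.
Lemma Y2_gt0 n w : 0 < Y2 n w. Proof. exact: lt_le_trans (y20_le_Y2 n w). Qed.
Lemma Y_gt0 n w : 0 < Y n w. Proof. by rewrite addr_gt0 ?Y1_gt0 ?Y2_gt0. Qed.

Lemma Y_leS n w : Y n w <= Y n.+1 w.
Proof.
rewrite /arru_Y Y1S Y2S.
have := increment_ge0 (X n w && (Z n w <= rho1 n w)) (xi1 n w).
have := increment_ge0 (~~ X n w && (rho2 n w <= Z n w)) (xi2 n w).
lra.
Qed.

Definition Ymax n := y10 + y20 + b * n%:R.

Lemma Ymax_gt0 n : 0 < Ymax n.
Proof.
have bn0 : 0 <= b * n%:R by rewrite mulr_ge0 // ltW // b_gt0.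
by rewrite /Ymax; move: y10_gt0 y20_gt0; lra.
Qed.

Lemma Y_le_Ymax n w : Y n w <= Ymax n.
Proof.
elim: n => [|n IH]; first by rewrite /Ymax mulr0 addr0.
have ub s : u s <= b by case/andP: (u_in_ab s).
have step : Y n.+1 w <= Y n w + b.
  rewrite /arru_Y Y1S Y2S; have := ltW b_gt0.
  by case: (X n w); rewrite /= ?add0r ?addr0; case: ifP => _;
    have := ub (xi1 n w); have := ub (xi2 n w); lra.
by apply: le_trans step _; rewrite /Ymax -natr1 mulrDr mulr1 addrA lerD2r.
Qed.

Lemma div_Ymax_le y yk k w : 0 <= y -> y <= yk -> y / Ymax k <= yk / Y k w.
Proof.
move=> y0 yyk; rewrite ler_pdivrMr ?Ymax_gt0 // mulrAC ler_pdivlMr ?Y_gt0 //.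
by apply: ler_pM => //; [exact/ltW/Y_gt0|exact: Y_le_Ymax].
Qed.

Lemma div_Ymax_lt1 y k : y < y10 + y20 -> y / Ymax k < 1.
Proof.
move=> yy; rewrite ltr_pdivrMr ?Ymax_gt0 // mul1r /Ymax.
by have := ltW b_gt0; have : 0 <= k%:R :> R by []; nra.
Qed.

Lemma div_Ymax_sum_unbounded y m M : 0 < y ->
  exists n, M <= \sum_(m <= k < n) y / Ymax k.
Proof.
move=> y0; pose C := y10 + y20 + b.
have C0 : 0 < C by rewrite /C; move: y10_gt0 y20_gt0 b_gt0; lra.
have [n hn] := harmonic_tail_unbounded m (M / (y / C)); exists n.
have : M <= (\sum_(m <= k < n) harmonic k) * (y / C) by rewrite -ler_pdivrMr ?divr_gt0.
move/le_trans; apply; rewrite mulr_suml ler_sum // => k _.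
rewrite /harmonic mulrC -mulrA -invfM ler_pM2l // lef_pV2 ?posrE ?Ymax_gt0 //.
  rewrite /Ymax /C -natr1; have := ltW b_gt0; have : 0 <= k%:R :> R by [].
  by move: y10_gt0 y20_gt0; nra.
by rewrite mulr_gt0 ?ltr0n.
Qed.

Lemma Z_ge k w : y10 / Ymax k <= Z k w.
Proof. exact/div_Ymax_le/y10_le_Y1/ltW. Qed.

Lemma Z_le k w : Z k w <= 1 - y20 / Ymax k.
Proof.
have -> : Z k w = 1 - Y2 k w / Y k w.
  by rewrite /arru_Z -(divff (lt0r_neq0 (Y_gt0 k w))) -mulrBl /arru_Y addrK.
by rewrite lerD2l lerN2; exact/div_Ymax_le/y20_le_Y2/ltW.
Qed.

Lemma negligible_eventually_notX :
  P.-negligible [set w | exists m, forall k, (m <= k)%N -> ~~ X k w].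
Proof.
pose c k := y10 / Ymax k.
have c01 k : 0 < c k < 1.
  by rewrite divr_gt0 ?Ymax_gt0 // div_Ymax_lt1 // ltrDl.
apply: (@negligibleS _ _ _ P (\bigcup_m [set w | forall k, (m <= k)%N ->
    [set` `[c k, +oo[] (U k w)])).
  move=> w [m H]; exists m => // k /H; rewrite /arru_X -leNgt /= in_itv /= andbT.
  exact: le_trans (Z_ge k w).
apply: negligible_bigcup => m.
apply: (negligible_U_always_in mxi1 mxi2 mU hind (c := c)
  (C := fun k => [set` `[c k, +oo[])) => [k|k _|M].
- exact: measurable_itv.
- by have /andP[c0 c1] := c01 k; exact: unif_itvcy.
- exact: div_Ymax_sum_unbounded.
Qed.

Lemma negligible_eventually_X :
  P.-negligible [set w | exists m, forall k, (m <= k)%N -> X k w].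
Proof.
pose c k := y20 / Ymax k.
have c01 k : 0 < c k < 1.
  by rewrite divr_gt0 ?Ymax_gt0 // div_Ymax_lt1 // ltrDr.
apply: (@negligibleS _ _ _ P (\bigcup_m [set w | forall k, (m <= k)%N ->
    [set` `]-oo, 1 - c k[] (U k w)])).
  move=> w [m H]; exists m => // k /H; rewrite /arru_X /= in_itv /=.
  by move/lt_le_trans; apply; exact: Z_le.
apply: negligible_bigcup => m.
apply: (negligible_U_always_in mxi1 mxi2 mU hind (c := c)
  (C := fun k => [set` `]-oo, 1 - c k[])) => [k|k _|M].
- exact: measurable_itv.
- have /andP[c0 c1] := c01 k.
  by apply: unif_itvNy; lra.
- exact: div_Ymax_sum_unbounded.
Qed.

Hypothesis mu_meas : measurable_fun setT u.
Hypothesis rho1_meas : forall n, arru_Fmeas u y10 y20 rho1 rho2 xi1 xi2 U n (rho1 n).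
Hypothesis rho2_meas : forall n, arru_Fmeas u y10 y20 rho1 rho2 xi1 xi2 U n (rho2 n).

(* [past n] is Omega with the sigma-algebra of the first [n] coordinates; by
   induction on [n] it contains the observation filtration F_n. *)
Local Notation past n := (g_sigma_algebraType (cylinders xi1 xi2 U n)).

Definition past_measurable n (f : Omega -> R) := measurable_fun setT (f : past n -> R).

Lemma past_measurable_widen n n' f : (n <= n')%N ->
  past_measurable n f -> past_measurable n' f.
Proof. by move=> nn' mf _ B mB; apply: (past_widen nn'); exact: mf. Qed.

Lemma past_measurable_xi1 k n : (k < n)%N -> measurable_fun setT (xi1 k : past n -> S).
Proof.
move=> kn _ B mB; rewrite setTI; apply: sub_sigma_algebra.
suff -> : xi1 k @^-1` B = [set w | [/\ B (xi1 k w), setT (xi2 k w) & setT (U k w)]].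
  exact: cylinders_coord.
by apply/seteqP; split => w /= => [|[]].
Qed.

Lemma past_measurable_xi2 k n : (k < n)%N -> measurable_fun setT (xi2 k : past n -> S).
Proof.
move=> kn _ B mB; rewrite setTI; apply: sub_sigma_algebra.
suff -> : xi2 k @^-1` B = [set w | [/\ setT (xi1 k w), B (xi2 k w) & setT (U k w)]].
  exact: cylinders_coord.
by apply/seteqP; split => w /= => [|[]].
Qed.

Lemma past_measurable_U k n : (k < n)%N -> past_measurable n (U k).
Proof.
move=> kn _ B mB; rewrite setTI; apply: sub_sigma_algebra.
suff -> : U k @^-1` B = [set w | [/\ setT (xi1 k w), setT (xi2 k w) & B (U k w)]].
  exact: cylinders_coord.
by apply/seteqP; split => w /= => [|[]].
Qed.

Lemma XE k : X k = (fun w => U k w * Y k w < Y1 k w).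
Proof. by apply: funext => w; rewrite /arru_X /arru_Z ltr_pdivlMr // Y_gt0. Qed.

Lemma Y1SE n : Y1 n.+1 = (fun w => Y1 n w +
  (if (U n w * Y n w < Y1 n w) && (Y1 n w <= rho1 n w * Y n w) then u (xi1 n w) else 0)).
Proof.
by apply: funext => w; rewrite Y1S XE /arru_Z ler_pdivrMr // Y_gt0.
Qed.

Lemma Y2SE n : Y2 n.+1 = (fun w => Y2 n w +
  (if ~~ (U n w * Y n w < Y1 n w) && (rho2 n w * Y n w <= Y1 n w) then u (xi2 n w) else 0)).
Proof.
by apply: funext => w; rewrite Y2S XE /arru_Z ler_pdivlMr // Y_gt0.
Qed.

Lemma past_measurable_X n k : (k < n)%N ->
  past_measurable n (Y1 k) -> past_measurable n (Y2 k) ->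
  measurable_fun setT (X k : past n -> bool).
Proof.
move=> kn mY1 mY2; rewrite XE; apply: measurable_fun_ltr => //.
by apply: measurable_funM; [exact: past_measurable_U|exact: measurable_funD].
Qed.

Lemma arru_gen_sub_past n :
  (forall k, (k < n)%N -> past_measurable n (Y1 k) /\ past_measurable n (Y2 k)) ->
  <<s arru_gen u y10 y20 rho1 rho2 xi1 xi2 U n >> `<=` <<s cylinders xi1 xi2 U n >>.
Proof.
move=> mY; apply: smallest_sub; first exact: smallest_sigma_algebra.
move=> _ [k kn [->|[A mA ->]]]; have [mY1 mY2] := mY k kn.
  rewrite (_ : [set w | X k w] = setT `&` (X k : past n -> bool) @^-1` [set true]).
    by apply: (past_measurable_X kn mY1 mY2 measurableT).
  by apply/seteqP; split => [w h|w [_ h]].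
have mobs : measurable_fun setT (arru_obs u y10 y20 rho1 rho2 xi1 xi2 U k : past n -> S).
  apply: measurable_fun_ifT; first exact: past_measurable_X.
  - exact: past_measurable_xi1.
  - exact: past_measurable_xi2.
by have := mobs measurableT _ mA; rewrite setTI.
Qed.

Lemma past_measurable_rho n :
  (forall k, (k < n)%N -> past_measurable n (Y1 k) /\ past_measurable n (Y2 k)) ->
  past_measurable n (rho1 n) /\ past_measurable n (rho2 n).
Proof.
move=> /arru_gen_sub_past gen_sub.
by split => _ B mB; rewrite setTI; apply: gen_sub; [exact: rho1_meas|exact: rho2_meas].
Qed.

Lemma past_measurable_Y12 n k : (k <= n)%N ->
  past_measurable n (Y1 k) /\ past_measurable n (Y2 k).
Proof.
elim: n k => [|n IH] k.
  by rewrite leqn0 => /eqP ->; split; exact: measurable_cst.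
have widen f : past_measurable n f -> past_measurable n.+1 f.
  exact: past_measurable_widen (leqnSn n).
rewrite leq_eqVlt => /orP[/eqP ->|kn]; last first.
  by have [h1 h2] := IH k kn; split; apply: widen.
have [/widen r1 /widen r2] := past_measurable_rho (fun j jn => IH j (ltnW jn)).
have [/widen h1 /widen h2] := IH n (leqnn n).
have mY : past_measurable n.+1 (Y n) by exact: measurable_funD.
have mUY : past_measurable n.+1 (fun w => U n w * Y n w).
  by apply: measurable_funM => //; exact: past_measurable_U.
have mX : measurable_fun setT ((fun w => U n w * Y n w < Y1 n w) : past n.+1 -> bool).
  exact: measurable_fun_ltr.
split; rewrite /past_measurable ?Y1SE ?Y2SE; apply: measurable_funD => //;
  apply: measurable_fun_ifT; try exact: measurable_cst.
- by apply: measurable_and => //; apply: measurable_fun_ler => //; exact: measurable_funM.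
- by apply: measurableT_comp => //; exact: past_measurable_xi1.
- apply: measurable_and; first exact: measurable_neg.
  by apply: measurable_fun_ler => //; exact: measurable_funM.
- by apply: measurableT_comp => //; exact: past_measurable_xi2.
Qed.

Lemma past_measurable_state n k : (k <= n)%N -> [/\ past_measurable n (Y1 k),
  past_measurable n (Y2 k), past_measurable n (rho1 k) & past_measurable n (rho2 k)].
Proof.
move=> kn; have [h1 h2] := past_measurable_Y12 kn.
have [r1 r2] := past_measurable_rho (fun j (jk : (j < k)%N) => past_measurable_Y12 (ltnW jk)).
by split => //; exact: past_measurable_widen kn _.
Qed.

Definition delta (j : nat) : R := j.+2%:R^-1.

Lemma delta_in01 j : 0 < delta j < 1.
Proof. by rewrite /delta invr_gt0 ltr0n /= invf_lt1 ?ltr0n // ltr1n. Qed.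

Definition stall j k w : bool := [&& Y1 k.+1 w == Y1 k w, Y2 k.+1 w == Y2 k w,
  delta j * Y k w <= Y1 k w, Y1 k w <= (1 - delta j) * Y k w & rho2 k w <= rho1 k w].

Definition stall_run m j n := [set w | forall k, (m <= k < n)%N -> stall j k w].

Lemma past_measurable_set n (f : past n -> bool) : measurable_fun setT f ->
  <<s cylinders xi1 xi2 U n >> [set w | f w].
Proof.
move=> mf; rewrite (_ : [set w | f w] = setT `&` f @^-1` [set true]).
  exact: (mf measurableT).
by apply/seteqP; split => [w h|w [_ h]].
Qed.

Lemma past_stall_run m j n : <<s cylinders xi1 xi2 U n >> (stall_run m j n).
Proof.
have -> : stall_run m j n = \bigcap_k [set w | (m <= k < n)%N ==> stall j k w].
  apply/seteqP; split => w /= H k; first by move=> _; apply/implyP; exact: H.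
  exact/implyP/H.
apply: (@bigcapT_measurable _ (past n)) => k; apply: past_measurable_set.
case: (ltnP k n) => kn; rewrite ?andbT ?andbF /=; last exact: measurable_cst.
have [Y1m Y2m r1 r2] := past_measurable_state (ltnW kn).
have [Y1Sm Y2Sm _ _] := past_measurable_state kn.
have Ym : past_measurable n (Y k) by exact: measurable_funD.
case: (m <= k)%N => /=; last exact: measurable_cst.
repeat apply: measurable_and; try exact: measurable_fun_eqr.
- by apply: measurable_fun_ler => //; exact: measurable_funM.
- by apply: measurable_fun_ler => //; exact: measurable_funM.
- exact: measurable_fun_ler.
Qed.

(* Since [rho2 <= rho1], no ball is added only if the urn drawn is the one
   whose threshold test fails, which pins [U] on one side of [Z]. *)
Lemma stall_U j n w : stall j n w ->
  if rho1 n w * Y n w < Y1 n w then U n w < 1 - delta j else delta j <= U n w.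
Proof.
case/and5P => /eqP no1 /eqP no2 dY1 Y1d r21; have Y0 := Y_gt0 n w.
move: no1 no2; rewrite Y1SE Y2SE.
case: ifP => [_ /eqP|h1 _]; first by rewrite addrC -subr_eq0 addrK gt_eqF ?u_gt0.
case: ifP => [_ /eqP|h2 _]; first by rewrite addrC -subr_eq0 addrK gt_eqF ?u_gt0.
case: ltP => r1Z.
  move: h2; rewrite (le_trans (ler_wpM2r (ltW Y0) r21) (ltW r1Z)) andbT => /negbFE UZ.
  by rewrite -(ltr_pM2r Y0) (lt_le_trans UZ Y1d).
move: h1; rewrite r1Z andbT => /negbT; rewrite -leNgt => ZU.
by rewrite -(ler_pM2r Y0) (le_trans dY1 ZU).
Qed.

Lemma stall_run_S m j n : (m <= n)%N ->
  (P (stall_run m j n.+1) <= (1 - delta j)%:E * P (stall_run m j n))%E.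
Proof.
move=> mn; have /andP[d0 d1] := delta_in01 j.
have [Y1m Y2m r1m _] := past_measurable_state (leqnn n).
have Ym : past_measurable n (Y n) by exact: measurable_funD.
pose G1 := stall_run m j n `&` [set w | rho1 n w * Y n w < Y1 n w].
pose G2 := stall_run m j n `&` [set w | ~~ (rho1 n w * Y n w < Y1 n w)].
have pG1 : <<s cylinders xi1 xi2 U n >> G1.
  apply: (@measurableI _ (past n)); first exact: past_stall_run.
  by apply: past_measurable_set; apply: measurable_fun_ltr => //; exact: measurable_funM.
have pG2 : <<s cylinders xi1 xi2 U n >> G2.
  apply: (@measurableI _ (past n)); first exact: past_stall_run.
  apply: past_measurable_set; apply: measurable_neg.
  by apply: measurable_fun_ltr => //; exact: measurable_funM.
have [mG1 mG2] := (measurable_past mxi1 mxi2 mU pG1, measurable_past mxi1 mxi2 mU pG2).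
pose C1 : set R := [set` `]-oo, 1 - delta j[]; pose C2 : set R := [set` `[delta j, +oo[].
have [mC1 mC2] : measurable C1 /\ measurable C2 by split; exact: measurable_itv.
have mUC C : measurable C -> measurable (U n @^-1` C).
  by move=> mC; rewrite -[X in measurable X]setTI; exact: mU.
have unifC1 : unif C1 = (1 - delta j)%:E by apply: unif_itvNy; lra.
have unifC2 : unif C2 = (1 - delta j)%:E by exact: unif_itvcy.
apply: (@le_trans _ _ (P ((G1 `&` U n @^-1` C1) `|` (G2 `&` U n @^-1` C2)))).
  apply: le_measure; rewrite ?inE; try by apply: measurableU; apply: measurableI; auto.
    by apply: (measurable_past mxi1 mxi2 mU); exact: past_stall_run.
  move=> w run; have run_n : stall_run m j n w.
    by move=> k /andP[mk kn]; apply: run; rewrite mk ltnW.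
  have := stall_U (run n _); rewrite mn ltnSn => /(_ isT).
  case: ifP => r1Z hU; [left|right]; do !split => //=.
    by rewrite r1Z.
  by rewrite /C2 /= in_itv /= hU.
apply: le_trans (measureU2 _ _ _) _; try by apply: measurableI; auto.
apply: (@le_trans _ _ (P G1 * unif C1 + P G2 * unif C2)%E).
  apply: leeD; rewrite le_eqVlt; apply/orP; left; apply/eqP.
  - exact: (past_indep_U mxi1 mxi2 mU hind mC1 pG1).
  - exact: (past_indep_U mxi1 mxi2 mU hind mC2 pG2).
rewrite unifC1 unifC2 -ge0_muleDl ?measure_ge0 // muleC.
apply: lee_wpmul2l; first by rewrite lee_fin subr_ge0 ltW.
rewrite -measureU //; last first.
  by apply/seteqP; split => w // [[_ /= h1] [_]]; rewrite /= h1.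
rewrite (_ : G1 `|` G2 = stall_run m j n) //; apply/seteqP; split => w; first by case=> -[].
by move=> run; case: (boolP (rho1 n w * Y n w < Y1 n w)) => ?; [left|right].
Qed.

Lemma stall_run_le_expr m j i : (P (stall_run m j (m + i)) <= ((1 - delta j) ^+ i)%:E)%E.
Proof.
elim: i => [|i IH].
  rewrite expr0 addn0; apply: probability_le1.
  by apply: (measurable_past mxi1 mxi2 mU); exact: past_stall_run.
rewrite addnS; apply: le_trans (stall_run_S j (leq_addr i m)) _.
rewrite exprS EFinM; apply: lee_wpmul2l => //.
by rewrite lee_fin subr_ge0; have /andP[_ /ltW] := delta_in01 j.
Qed.

Lemma negligible_stall_forever m j : P.-negligible (\bigcap_i stall_run m j (m + i)).
Proof.
have /andP[d0 d1] := delta_in01 j.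
apply: (negligible_bigcap (mu := P)) => [i|e e0].
  by apply: (measurable_past mxi1 mxi2 mU); exact: past_stall_run.
pose i := (Num.Def.trunc (delta j * e)^-1).+1.
have die : 1 <= delta j * i%:R * e.
  have := truncnS_gt (delta j * e)^-1; rewrite -/i -div1r ltr_pdivrMr ?mulr_gt0 // => ie.
  by rewrite ltW // mulrAC mulrC.
exists i; apply: le_trans (stall_run_le_expr m j i) _; rewrite lee_fin.
have d01 : 0 <= delta j <= 1 by apply/andP; split; exact: ltW.
have := expr1B_mul1D_le1 i d01.
have : 0 <= (1 - delta j) ^+ i by rewrite exprn_ge0 // subr_ge0 ltW.
set q := _ ^+ i; set t := delta j * i%:R; move: die; rewrite -/t; nra.
Qed.

Lemma Y_jump k w : ~ (Y1 k.+1 w = Y1 k w /\ Y2 k.+1 w = Y2 k w) -> Y k w + a <= Y k.+1 w.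
Proof.
rewrite /arru_Y Y1S Y2S.
have /andP[au1 _] := u_in_ab (xi1 k w); have /andP[au2 _] := u_in_ab (xi2 k w).
by do 2!case: ifP => _; rewrite ?addr0 => H; first [by case: H | move: a_gt0; lra].
Qed.

Lemma Y_cvgry w :
  (forall m, exists2 k, (m <= k)%N & ~ (Y1 k.+1 w = Y1 k w /\ Y2 k.+1 w = Y2 k w)) ->
  Y n w @[n --> \oo] --> +oo.
Proof.
move=> jumps; have /nondecreasing_seqP Yw := Y_leS ^~ w.
have Y_unbounded i : exists n, Y 0 w + a * i%:R <= Y n w.
  elim: i => [|i [n hn]]; first by exists 0%N; rewrite mulr0 addr0.
  have [k nk /Y_jump Yk] := jumps n; exists k.+1; apply: le_trans Yk.
  by rewrite -natr1 mulrDr mulr1 addrA lerD2r (le_trans hn) ?Yw.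
apply/cvgryPge => A; have [n0 h0] := Y_unbounded (Num.Def.trunc (A / a)).+1.
near=> n; apply: le_trans (Yw n0 n _); last by near: n; exists n0.
apply: le_trans h0; have := truncnS_gt (A / a); rewrite ltr_pdivrMr // => hA.
by have := Y_gt0 0 w; rewrite mulrC; lra.
Unshelve. all: by end_near.
Qed.

(* Without growth, [Y1] and [Y2] are eventually constant and positive, so
   [Z] stays in some [[delta j, 1 - delta j]]. *)
Lemma stall_forever w : ~ (Y n w @[n --> \oo] --> +oo) ->
  (forall k, rho2 k w <= rho1 k w) -> exists m j, forall i, stall_run m j (m + i) w.
Proof.
move=> Ybnd r21.
have [m const] : exists m, forall k, (m <= k)%N -> Y1 k.+1 w = Y1 k w /\ Y2 k.+1 w = Y2 k w.
  apply: contrapT => nconst; apply: Ybnd; apply: Y_cvgry => m.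
  apply: contrapT => njump; apply: nconst; exists m => k mk.
  by apply: contrapT => nk; apply: njump; exists k.
have stay k : (m <= k)%N -> Y1 k w = Y1 m w /\ Y2 k w = Y2 m w.
  move=> mk; rewrite -(subnKC mk); elim: (k - m)%N => [|i [IH1 IH2]]; first by rewrite addn0.
  by rewrite addnS; have [-> ->] := const (m + i)%N (leq_addr _ _).
have Y1m := Y1_gt0 m w; have Y2m := Y2_gt0 m w; have Ym := Y_gt0 m w.
pose j := Num.Def.trunc (Y m w / Y1 m w + Y m w / Y2 m w).
have jt := truncnS_gt (Y m w / Y1 m w + Y m w / Y2 m w); rewrite -/j in jt.
have [q1 q2] : 0 < Y m w / Y1 m w /\ 0 < Y m w / Y2 m w by rewrite !divr_gt0.
have delta_le y : 0 < y -> Y m w / y < j.+1%:R -> delta j * Y m w <= y.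
  move=> y0 hy; rewrite /delta mulrC ler_pdivrMr ?ltr0n // -natr1.
  by move: hy; rewrite ltr_pdivrMr // => hy; lra.
have d1 : delta j * Y m w <= Y1 m w by apply: delta_le => //; lra.
have d2 : delta j * Y m w <= Y2 m w by apply: delta_le => //; lra.
exists m, j => i k /andP[mk _]; have [e1 e2] := const k mk; have [c1 c2] := stay k mk.
rewrite /stall e1 e2 /arru_Y c1 c2 !eqxx r21 /= andbT.
by move: d1 d2; rewrite /arru_Y => d1 d2; apply/andP; split; lra.
Qed.

Hypothesis rho_ordered : forall n, {ae P, forall w, rho2 n w <= rho1 n w}.

Lemma ae_Y_cvgry : {ae P, forall w, Y n w @[n --> \oo] --> +oo}.
Proof.
apply: (@negligibleS _ _ _ P ((\bigcup_k ~` [set w | rho2 k w <= rho1 k w]) `|`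
    \bigcup_m \bigcup_j \bigcap_i stall_run m j (m + i))).
  move=> w /= Ybnd; have [r21|] := pselect (forall k, rho2 k w <= rho1 k w).
    by have [m [j run]] := stall_forever Ybnd r21; right; exists m => //; exists j.
  by move/existsNP => [k nr21]; left; exists k.
apply: negligibleU; first exact: negligible_bigcup.
by apply: negligible_bigcup => m; apply: negligible_bigcup => j; exact: negligible_stall_forever.
Qed.

Lemma minN_cvgry w : (forall m, exists2 k, (m <= k)%N & X k w) ->
  (forall m, exists2 k, (m <= k)%N & ~~ X k w) ->
  ((minn (N1 n w) (N2 n w))%:R : R) @[n --> \oo] --> +oo.
Proof.
move=> /sum_nat_unbounded N1_unbnd /sum_nat_unbounded N2_unbnd.
have N1_mono : {homo N1 ^~ w : p q / (p <= q)%N}.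
  by apply: homo_leq leqnn leq_trans _ => n; rewrite /arru_N1 big_ord_recr /= leq_addr.
have N2_mono : {homo N2 ^~ w : p q / (p <= q)%N}.
  by apply: homo_leq leqnn leq_trans _ => n; rewrite /arru_N2 big_ord_recr /= leq_addr.
apply/cvgryPge => A; pose r := (Num.Def.trunc A).+1.
have [n1 hn1] : exists n1, (r <= N1 n1 w)%N := N1_unbnd r.
have [n2 hn2] : exists n2, (r <= N2 n2 w)%N := N2_unbnd r.
near=> n; apply: le_trans (ltW (truncnS_gt A)) _; rewrite ler_nat leq_min.
have [n1n n2n] : (n1 <= n)%N /\ (n2 <= n)%N by split; near: n; [exists n1|exists n2].
by rewrite (leq_trans hn1 (N1_mono _ _ n1n)) (leq_trans hn2 (N2_mono _ _ n2n)).
Unshelve. all: by end_near.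
Qed.

Lemma ae_minN_cvgry : {ae P, forall w, ((minn (N1 n w) (N2 n w))%:R : R) @[n --> \oo] --> +oo}.
Proof.
apply: (negligibleS _ (negligibleU negligible_eventually_notX negligible_eventually_X)).
move=> w /= Nbnd; apply: contrapT => often; apply: Nbnd; apply: minN_cvgry => m.
  apply: contrapT => h; apply: often; left; exists m => k mk.
  by apply/negP => Xk; apply: h; exists k.
apply: contrapT => h; apply: often; right; exists m => k mk.
by apply: contrapT => /negP Xk; apply: h; exists k.
Qed.

End arru.
Unset Implicit Arguments.

Theorem lemma4p2 (R : realType) (dO : measure_display) (Omega : measurableType dO)
  (P : probability Omega R) (dS : measure_display) (S : measurableType dS)
  (mu1 mu2 : probability S R) (a b : R) (u : S -> R)
  (xi1 xi2 : nat -> Omega -> S) (U : nat -> Omega -> R)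
  (y10 y20 : R) (rho1 rho2 : nat -> Omega -> R) :
  0 < a -> a <= b ->
  measurable_fun setT u -> (forall s, a <= u s <= b) ->
  (forall k, measurable_fun setT (xi1 k)) ->
  (forall k, measurable_fun setT (xi2 k)) ->
  (forall k, measurable_fun setT (U k)) ->
  (* (xi1 k), (xi2 k), (U k) : mutually independent, i.i.d. mu1 / mu2 / Uniform(0,1) *)
  (forall (n : nat) (A B : nat -> set S) (C : nat -> set R),
     (forall k, measurable (A k)) -> (forall k, measurable (B k)) ->
     (forall k, measurable (C k)) ->
     P [set w | forall k, (k < n)%N -> [/\ A k (xi1 k w), B k (xi2 k w) & C k (U k w)]]
     = (\prod_(k < n) (mu1 (A k) * mu2 (B k) * lebesgue_measure (C k `&` `]0%R, 1%R[)))%E) ->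
  0 < y10 -> 0 < y20 ->
  (forall n, arru_Fmeas u y10 y20 rho1 rho2 xi1 xi2 U n (rho1 n)) ->
  (forall n, arru_Fmeas u y10 y20 rho1 rho2 xi1 xi2 U n (rho2 n)) ->
  (forall n w, 0 < rho1 n w < 1) -> (forall n w, 0 < rho2 n w < 1) ->
  (forall n, {ae P, forall w, rho2 n w <= rho1 n w}) ->
  {ae P, forall w, arru_Y u y10 y20 rho1 rho2 xi1 xi2 U n w @[n --> \oo] --> +oo} /\
  {ae P, forall w,
     ((minn (arru_N1 u y10 y20 rho1 rho2 xi1 xi2 U n w)
            (arru_N2 u y10 y20 rho1 rho2 xi1 xi2 U n w))%:R : R) @[n --> \oo] --> +oo}.
Proof.
move=> a0 _ mu u_ab mxi1 mxi2 mU indep y10_0 y20_0 rho1_m rho2_m _ _ rho_ord.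
split.
- exact: (ae_Y_cvgry a0 u_ab y10_0 y20_0 mxi1 mxi2 mU indep mu rho1_m rho2_m rho_ord).
- exact: (ae_minN_cvgry rho1 rho2 a0 u_ab y10_0 y20_0 mxi1 mxi2 mU indep).
Qed.
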